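(* For $n\in\{0,1,2,\dots\}$ define \[ b_n=\frac14\frac{(-1)^n}{n!}\sum_{k=0}^{n}(-1)^kS(n,k)(2k-1)!!, \] \[ c_n=\frac{(-1)^{n+1}}{n!}\sum_{k=1}^{n}(-1)^kS(n,k)\frac{k!}{2^k}\sum_{\ell=1}^{k}(-1)^{\ell}\binom{2k-\ell}{k}\frac{2^{\ell/2}}{\ell}\sin\frac{3\ell\pi}{4}. \] Then $\lim_{n\to\infty}b_n=+\infty$, $\lim_{n\to\infty}\frac{c_n}{b_n}=\pi$, and consequently $\lim_{n\to\infty}c_n=+\infty$.
   Context: $S(n,k)$ are the Stirling numbers of the second kind, given by $\frac{(e^x-1)^k}{k!}=\sum_{n\ge k}S(n,k)\frac{x^n}{n!}$. $(2k-1)!!=1\cdot3\cdots(2k-1)$ for $k\ge1$, and $(-1)!!=1$. These $b_n,c_n$ satisfy $W(z)=\sum_n(b_n\pi-c_n)z^n$ for $|z|<\ln2$, where $W(z)=\frac{\arctan\sqrt{2e^{-z}-1}}{\sqrt{2e^{-z}-1}}$ with principal branches. *)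

From Stdlib Require Import Reals Factorial Arith.
From Coquelicot Require Import Coquelicot.
Open Scope R_scope.

Fixpoint stirling2 (n k : nat) : nat :=
  match n, k with
  | O, O => 1%nat
  | O, S _ => 0%nat
  | S _, O => 0%nat
  | S n', S k' => ((S k') * stirling2 n' (S k') + stirling2 n' k')%nat
  end.

(* odd_dfact k = (2k-1)!! = 1*3*...*(2k-1), with odd_dfact 0 = (-1)!! = 1. *)
Fixpoint odd_dfact (k : nat) : nat :=
  match k with
  | O => 1%nat
  | S k' => ((2 * k' + 1) * odd_dfact k')%nat
  end.

Definition b_seq (n : nat) : R :=
  / 4 * ((-1) ^ n / INR (fact n)) *
  sum_n_m (fun k => (-1) ^ k * INR (stirling2 n k) * INR (odd_dfact k)) 0 n.

Definition c_seq (n : nat) : R :=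
  (-1) ^ (S n) / INR (fact n) *
  sum_n_m (fun k =>
    (-1) ^ k * INR (stirling2 n k) * (INR (fact k) / 2 ^ k) *
    sum_n_m (fun l =>
      (-1) ^ l * Binomial.C (2 * k - l) k * Rpower 2 (INR l / 2) / INR l
        * sin (3 * INR l * PI / 4)) 1 k) 1 n.

(* Let [beta k = (2k-1)!!/k!] and [theta k] be the Taylor coefficients of
   [(1 - 2x)^(-1/2)] and of [sqrt ((1 + x) / (1 - x))]. Substituting [x = 1 - e^(-z)] in
   the first and [x = e^z - 1] in the second gives the same function [(2 e^(-z) - 1)^(-1/2)];
   on coefficients this reads [4 n! b_n = sum_k S(n,k) k! theta_k], both sides solving the
   recurrence encoded by [X = (2 - e^z) X']. As [theta > 0], that recurrence makes [b_n]
   grow at least linearly.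
   Likewise [pi b_n - c_n = (-1)^n / n! sum_k (-1)^k S(n,k) k! delta_k] with
   [delta_k = int_0^1 (2x^2/(1+x^2))^k dx/(1+x^2)], the inner sums of [c_n] being identified
   through a Pascal-type recursion for binomial sums of the powers of [1 - i]. Since
   [delta_k = O(1/k)] while [theta_k >= 1/sqrt(2k+1)], eventually [delta_k <= eps theta_k],
   whence [pi b_n - c_n = o(b_n)]. *)

From Stdlib Require Import Reals Arith Lra Lia FunctionalExtensionality.
From Coquelicot Require Import Coquelicot.
Open Scope R_scope.
Set Bullet Behavior "Strict Subproofs".

Section RealSums.

Implicit Types (a b : nat -> R) (n m : nat).

Lemma sumR_Sn_m a n m : (n <= m)%nat -> sum_n_m a n m = a n + sum_n_m a (S n) m :> R.
Proof. intros H. now rewrite sum_Sn_m. Qed.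

Lemma sumR_n_Sm a n m : (n <= S m)%nat -> sum_n_m a n (S m) = sum_n_m a n m + a (S m) :> R.
Proof. intros H. now rewrite sum_n_Sm. Qed.

Lemma sumR_empty a n m : (m < n)%nat -> sum_n_m a n m = 0 :> R.
Proof. intros H. now rewrite sum_n_m_zero. Qed.

Lemma sumR_single a n : sum_n_m a n n = a n :> R.
Proof. apply sum_n_n. Qed.

Lemma sumR_plus a b n m :
  sum_n_m (fun k => a k + b k) n m = sum_n_m a n m + sum_n_m b n m :> R.
Proof. apply (sum_n_m_plus a b). Qed.

Lemma sumR_scal_l c a n m : sum_n_m (fun k => c * a k) n m = c * sum_n_m a n m :> R.
Proof. apply (sum_n_m_mult_l c a). Qed.

Lemma sumR_ext a b n m :
  (forall k, (n <= k <= m)%nat -> a k = b k) -> sum_n_m a n m = sum_n_m b n m :> R.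
Proof. apply sum_n_m_ext_loc. Qed.

Lemma sumR_minus a b n m :
  sum_n_m (fun k => a k - b k) n m = sum_n_m a n m - sum_n_m b n m :> R.
Proof.
  transitivity (sum_n_m (fun k => a k + (-1) * b k) n m).
  - apply sumR_ext. intros. ring.
  - rewrite sumR_plus, sumR_scal_l. ring.
Qed.

Lemma sumR_shift a n m : sum_n_m (fun k => a (S k)) n m = sum_n_m a (S n) (S m) :> R.
Proof. apply (sum_n_m_S a). Qed.

Lemma sumR_Chasles a n m p : (n <= S m)%nat -> (m <= p)%nat ->
  sum_n_m a n p = sum_n_m a n m + sum_n_m a (S m) p :> R.
Proof. intros. now rewrite (sum_n_m_Chasles a n m p). Qed.

Lemma sumR_telescope a n m : (n <= S m)%nat ->
  sum_n_m (fun k => a (S k) - a k) n m = a (S m) - a n :> R.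
Proof.
  intros H. induction m as [|m IH].
  - destruct n as [|[|n]]; [rewrite sumR_single | rewrite sumR_empty by lia | lia]; ring.
  - destruct (Nat.eq_dec n (S (S m))) as [->|Hn].
    + rewrite sumR_empty by lia. ring.
    + rewrite sumR_n_Sm, IH by lia. ring.
Qed.

Lemma sumR_le a b n m :
  (forall k, (n <= k <= m)%nat -> a k <= b k) -> sum_n_m a n m <= sum_n_m b n m.
Proof.
  intros H. destruct (le_lt_dec n m) as [Hnm|Hmn].
  - induction Hnm as [|m Hnm IH].
    + rewrite !sumR_single. apply H. lia.
    + rewrite !sumR_n_Sm by lia. apply Rplus_le_compat.
      * apply IH. intros k Hk. apply H. lia.
      * apply H. lia.
  - rewrite !sumR_empty by lia. lra.
Qed.

Lemma sumR_nonneg a n m : (forall k, (n <= k <= m)%nat -> 0 <= a k) -> 0 <= sum_n_m a n m.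
Proof.
  intros H. apply Rle_trans with (sum_n_m (fun _ => 0) n m).
  - rewrite sum_n_m_const. lra.
  - now apply sumR_le.
Qed.

Lemma sumR_abs a n m : Rabs (sum_n_m a n m) <= sum_n_m (fun k => Rabs (a k)) n m.
Proof. exact (norm_sum_n_m a n m). Qed.

Lemma sumR_const_le a c n m : (forall k, (n <= k <= m)%nat -> a k <= c) ->
  sum_n_m a n m <= INR (S m - n) * c.
Proof. intros H. rewrite <- sum_n_m_const. now apply sumR_le. Qed.

Lemma sumR_ge_last a m : (forall k, 0 <= a k) -> a m <= sum_n_m a 0 m.
Proof.
  intros H. destruct m as [|m]; [rewrite sumR_single; lra|].
  rewrite sumR_n_Sm by lia. pose proof (sumR_nonneg a 0 m (fun k _ => H k)). lra.
Qed.

End RealSums.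

(** * Binomial sums of the powers of [1 - i] *)

Fixpoint binom (n k : nat) : nat :=
  match k, n with
  | O, _ => 1
  | S _, O => 0
  | S k', S n' => binom n' k' + binom n' (S k')
  end.

Lemma binom_gt n k : (n < k)%nat -> binom n k = 0%nat.
Proof.
  revert k; induction n as [|n IH]; intros [|k] H; simpl; try lia; auto.
  rewrite !IH by lia. reflexivity.
Qed.

Lemma binom_n_0 n : binom n 0 = 1%nat.
Proof. destruct n; reflexivity. Qed.

Lemma binom_n_n n : binom n n = 1%nat.
Proof. induction n as [|n IH]; simpl; auto. rewrite IH, binom_gt by lia. reflexivity. Qed.

Lemma C_binom n k : (k <= n)%nat -> Binomial.C n k = INR (binom n k).
Proof.
  revert k; induction n as [|n IH]; intros k H.
  - replace k with 0%nat by lia. now rewrite C_n_0.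
  - destruct k as [|k]; [now rewrite C_n_0, binom_n_0|].
    destruct (Nat.eq_dec k n) as [->|Hkn]; [now rewrite C_n_n, binom_n_n|].
    rewrite <- pascal by lia. simpl binom. rewrite plus_INR, !IH by lia. reflexivity.
Qed.

Lemma binom_sym a b : binom (a + b) a = binom (a + b) b.
Proof.
  apply INR_eq. rewrite <- !C_binom by lia.
  rewrite pascal_step1 by lia. f_equal. lia.
Qed.

Lemma binom_Sn_n n : INR (binom (S n) n) = INR (S n).
Proof.
  rewrite <- C_binom by lia. unfold Binomial.C. replace (S n - n)%nat with 1%nat by lia.
  rewrite fact_simpl, mult_INR. pose proof (INR_fact_neq_0 n). simpl. field. auto.
Qed.

Lemma binom_SSn_n n : INR (binom (S (S n)) n) = INR (S (S n)) * INR (S n) / 2.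
Proof.
  rewrite <- C_binom by lia. unfold Binomial.C. replace (S (S n) - n)%nat with 2%nat by lia.
  rewrite !fact_simpl, !mult_INR. pose proof (INR_fact_neq_0 n). simpl. field. auto.
Qed.

Lemma binom_center m : INR (binom (2 * m + 2) (S m)) = 2 * INR (binom (2 * m + 1) m).
Proof.
  replace (2 * m + 2)%nat with (S (2 * m + 1)) by lia.
  change (binom (S (2 * m + 1)) (S m))
    with (binom (2 * m + 1) m + binom (2 * m + 1) (S m))%nat.
  rewrite plus_INR. replace (2 * m + 1)%nat with (S m + m)%nat by lia.
  rewrite (binom_sym (S m) m). ring.
Qed.

(* [pow_1mi l] is [(1 - i)^l] as a pair (real part, imaginary part). *)
Fixpoint pow_1mi (l : nat) : R * R :=
  match l with
  | O => (1, 0)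
  | S l' => let (x, y) := pow_1mi l' in (x + y, y - x)
  end.

Definition re_1mi l := fst (pow_1mi l).
Definition im_1mi l := snd (pow_1mi l).

Lemma re_1mi_S l : re_1mi (S l) = re_1mi l + im_1mi l.
Proof. unfold re_1mi, im_1mi. simpl. now destruct (pow_1mi l). Qed.

Lemma im_1mi_S l : im_1mi (S l) = im_1mi l - re_1mi l.
Proof. unfold re_1mi, im_1mi. simpl. now destruct (pow_1mi l). Qed.

Lemma re_1mi_1 : re_1mi 1 = 1.
Proof. unfold re_1mi. simpl. ring. Qed.

Lemma im_1mi_1 : im_1mi 1 = -1.
Proof. unfold im_1mi. simpl. ring. Qed.

(* [1 - i = - sqrt 2 * exp (3 i pi / 4)]. *)
Lemma polar_1mi l :
  (-1) ^ l * Rpower 2 (INR l / 2) * cos (3 * INR l * PI / 4) = re_1mi l /\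
  (-1) ^ l * Rpower 2 (INR l / 2) * sin (3 * INR l * PI / 4) = im_1mi l.
Proof.
  induction l as [|l [IHre IHim]].
  - simpl. replace (0 / 2) with 0 by field. replace (3 * 0 * PI / 4) with 0 by field.
    rewrite Rpower_O, cos_0, sin_0 by lra. unfold re_1mi, im_1mi. simpl. split; ring.
  - rewrite re_1mi_S, im_1mi_S, <- IHre, <- IHim, S_INR.
    replace ((INR l + 1) / 2) with (INR l / 2 + / 2) by field.
    replace (3 * (INR l + 1) * PI / 4) with (3 * INR l * PI / 4 + (PI - PI / 4)) by field.
    rewrite Rpower_plus, Rpower_sqrt by lra.
    rewrite sin_plus, cos_plus, sin_PI_x, Rtrigo_facts.cos_pi_minus, sin_PI4, cos_PI4.
    assert (Hs : sqrt 2 <> 0) by (apply Rgt_not_eq, sqrt_lt_R0; lra).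
    simpl pow. split; field; exact Hs.
Qed.

(* For [e] the real or imaginary part of [(1 - i)^l], these sums obey a Pascal
   recursion in [(n, m)], which evaluates them on the line [n = 2 m + 1]. *)
Definition bsum (e : nat -> R) (n m : nat) : R :=
  sum_n_m (fun l => INR (binom (n - l) m) * e l) 1 n.

Lemma bsum_S e n m : bsum e (S n) m = INR (binom n m) * e 1%nat + bsum (fun l => e (S l)) n m.
Proof.
  unfold bsum. rewrite sumR_Sn_m, <- sumR_shift by lia.
  replace (S n - 1)%nat with n by lia. reflexivity.
Qed.

Lemma bsum_pascal e n m :
  bsum (fun l => e (S l)) n (S m) - bsum e n (S m) - bsum e n m = - INR (binom n (S m)) * e 1%nat.
Proof.
  unfold bsum. rewrite <- !sumR_minus.
  set (g l := INR (binom (S n - l) (S m)) * e l).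
  rewrite (sumR_ext _ (fun l => g (S l) - g l)).
  - rewrite sumR_telescope by lia. unfold g.
    replace (S n - S n)%nat with 0%nat by lia. replace (S n - 1)%nat with n by lia.
    simpl binom. simpl INR. ring.
  - intros l Hl. unfold g. replace (S n - S l)%nat with (n - l)%nat by lia.
    replace (S n - l)%nat with (S (n - l)) by lia. simpl binom. rewrite plus_INR. ring.
Qed.

Lemma bsum_plus a b n m : bsum (fun l => a l + b l) n m = bsum a n m + bsum b n m.
Proof. unfold bsum. rewrite <- sumR_plus. apply sumR_ext. intros; ring. Qed.

Lemma bsum_minus a b n m : bsum (fun l => a l - b l) n m = bsum a n m - bsum b n m.
Proof. unfold bsum. rewrite <- sumR_minus. apply sumR_ext. intros; ring. Qed.

Lemma re_1mi_shift : (fun l => re_1mi (S l)) = (fun l => re_1mi l + im_1mi l).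
Proof. extensionality l. apply re_1mi_S. Qed.

Lemma im_1mi_shift : (fun l => im_1mi (S l)) = (fun l => im_1mi l - re_1mi l).
Proof. extensionality l. apply im_1mi_S. Qed.

Lemma bsum_re_S n m :
  bsum re_1mi (S n) m = INR (binom n m) + bsum re_1mi n m + bsum im_1mi n m.
Proof. rewrite bsum_S, re_1mi_1, re_1mi_shift, bsum_plus. ring. Qed.

Lemma bsum_im_S n m :
  bsum im_1mi (S n) m = - INR (binom n m) + bsum im_1mi n m - bsum re_1mi n m.
Proof. rewrite bsum_S, im_1mi_1, im_1mi_shift, bsum_minus. ring. Qed.

Lemma bsum_re_Sm n m : bsum re_1mi n (S m) = - bsum im_1mi n m - INR (binom n (S m)).
Proof.
  pose proof (bsum_pascal im_1mi n m) as H.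
  rewrite im_1mi_1, im_1mi_shift, bsum_minus in H. lra.
Qed.

Lemma bsum_im_Sm n m : bsum im_1mi n (S m) = bsum re_1mi n m - INR (binom n (S m)).
Proof.
  pose proof (bsum_pascal re_1mi n m) as H.
  rewrite re_1mi_1, re_1mi_shift, bsum_plus in H. lra.
Qed.

Lemma bsum_center_S m :
  bsum re_1mi (2 * S m + 1) (S m) = 2 * bsum re_1mi (2 * m + 1) m /\
  bsum im_1mi (2 * S m + 1) (S m) =
    2 * bsum im_1mi (2 * m + 1) m - INR (binom (2 * m + 2) (S m)).
Proof.
  replace (2 * S m + 1)%nat with (S (S (2 * m + 1))) by lia.
  set (N := S (2 * m + 1)).
  rewrite (bsum_re_S N), (bsum_im_S N), !bsum_re_Sm, !bsum_im_Sm.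
  unfold N. rewrite bsum_re_S, bsum_im_S.
  replace (S (2 * m + 1)) with (2 * m + 2)%nat by lia.
  rewrite binom_center. split; ring.
Qed.

Lemma bsum_re_center m : bsum re_1mi (2 * m + 1) m = 2 ^ m.
Proof.
  induction m as [|m IH].
  - unfold bsum. rewrite sumR_single. simpl. rewrite re_1mi_1. ring.
  - rewrite (proj1 (bsum_center_S m)), IH. simpl. ring.
Qed.

Definition G (k : nat) : R :=
  sum_n_m (fun l => Binomial.C (2 * k - l) k * im_1mi l / INR l) 1 k.

Lemma G_0 : G 0 = 0.
Proof. unfold G. apply sumR_empty. lia. Qed.

(* With [j = k - l], this compares the coefficients of [G (S k)] and [G k]. *)
Lemma C_G_coef K j : (j <= K)%nat ->
  INR (S (S K)) * Binomial.C (S K + j + 2) (S (S K))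
    - 2 * INR (2 * S K + 1) * Binomial.C (S K + j) (S K)
  = INR (S K - j) * (2 * Binomial.C (S K + j) K - Binomial.C (S K + j + 1) (S K)).
Proof.
  intros Hj. unfold Binomial.C.
  replace (S K + j + 2 - S (S K))%nat with (S j) by lia.
  replace (S K + j - S K)%nat with j by lia.
  replace (S K + j - K)%nat with (S j) by lia.
  replace (S K + j + 1 - S K)%nat with (S j) by lia.
  replace (S K + j + 2)%nat with (S (S (S K + j))) by lia.
  replace (S K + j + 1)%nat with (S (S K + j)) by lia.
  rewrite (fact_simpl (S (S K + j))), (fact_simpl (S K + j)).
  rewrite (fact_simpl (S K)), (fact_simpl K), (fact_simpl j).
  rewrite minus_INR by lia.
  replace (2 * S K + 1)%nat with (S (S (S (2 * K)))) by lia.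
  rewrite !mult_INR, !S_INR, plus_INR, mult_INR, !S_INR.
  pose proof (INR_fact_neq_0 (S K + j)). pose proof (INR_fact_neq_0 K).
  pose proof (INR_fact_neq_0 j). pose proof (pos_INR K). pose proof (pos_INR j).
  simpl INR. field. repeat split; lra.
Qed.

Lemma bsum_trunc e n m : (m <= n)%nat ->
  bsum e n m = sum_n_m (fun l => INR (binom (n - l) m) * e l) 1 (n - m).
Proof.
  intros H. unfold bsum. rewrite (sumR_Chasles _ 1 (n - m) n) by lia.
  rewrite (sumR_ext _ (fun _ => 0) (S (n - m))), sum_n_m_const; [ring|].
  intros l Hl. rewrite binom_gt by lia. simpl. ring.
Qed.

Lemma G_diff K (k := S K) :
  INR (S k) * G (S k) - 2 * INR (2 * k + 1) * G k =
  sum_n_m (fun l => (2 * INR (binom (2 * k - l) K) - INR (binom (2 * k + 1 - l) k))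
                    * im_1mi l) 1 (S k).
Proof.
  unfold G. rewrite !sumR_n_Sm by lia.
  replace (2 * S k - S k)%nat with (S k) by lia.
  replace (2 * k - S k)%nat with K by (unfold k; lia).
  replace (2 * k + 1 - S k)%nat with k by lia.
  rewrite C_n_n, !binom_n_n.
  assert (Hsum :
    sum_n_m (fun l => INR (S k) * (Binomial.C (2 * S k - l) (S k) * im_1mi l / INR l)
                     - 2 * INR (2 * k + 1) * (Binomial.C (2 * k - l) k * im_1mi l / INR l)) 1 k
    = sum_n_m (fun l => (2 * INR (binom (2 * k - l) K) - INR (binom (2 * k + 1 - l) k))
                        * im_1mi l) 1 k).
  { apply sumR_ext. intros l Hl.
    assert (Hl0 : INR l <> 0) by (apply not_0_INR; lia).
    pose proof (C_G_coef K (k - l) ltac:(unfold k in *; lia)) as Hc. fold k in Hc.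
    replace (k + (k - l) + 2)%nat with (2 * S k - l)%nat in Hc by lia.
    replace (k + (k - l) + 1)%nat with (2 * k + 1 - l)%nat in Hc by lia.
    replace (k + (k - l))%nat with (2 * k - l)%nat in Hc by lia.
    replace (k - (k - l))%nat with l in Hc by lia.
    rewrite <- (C_binom (2 * k - l) K), <- (C_binom (2 * k + 1 - l) k) by (unfold k in *; lia).
    transitivity ((INR (S k) * Binomial.C (2 * S k - l) (S k)
                   - 2 * INR (2 * k + 1) * Binomial.C (2 * k - l) k) * im_1mi l / INR l).
    - field. exact Hl0.
    - rewrite Hc. field. exact Hl0. }
  rewrite sumR_minus, !sumR_scal_l in Hsum. rewrite <- Hsum.
  rewrite S_INR. change (INR 1) with 1. field. pose proof (pos_INR k). lra.
Qed.

Lemma G_rec k : INR (S k) * G (S k) - 2 * INR (2 * k + 1) * G k = - 2 ^ k.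
Proof.
  destruct k as [|K].
  - unfold G. rewrite sumR_single, sumR_empty by lia. simpl.
    rewrite C_n_n, im_1mi_1. field.
  - rewrite G_diff.
    transitivity (2 * bsum im_1mi (2 * S K) K - bsum im_1mi (2 * S K + 1) (S K)).
    + rewrite !bsum_trunc by lia.
      replace (2 * S K - K)%nat with (S (S K)) by lia.
      replace (2 * S K + 1 - S K)%nat with (S (S K)) by lia.
      rewrite <- sumR_scal_l, <- sumR_minus. apply sumR_ext. intros; ring.
    + replace (2 * S K)%nat with (S (2 * K + 1)) at 1 by lia.
      rewrite bsum_im_S, (proj2 (bsum_center_S K)), bsum_re_center, binom_center.
      simpl. ring.
Qed.

(** * The weights [beta], [gam] and [delta] *)

Definition beta (k : nat) : R := INR (odd_dfact k) / INR (fact k).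
Definition gam (k : nat) : R := G k / 2 ^ k.
Definition delta (k : nat) : R := PI / 4 * beta k + gam k.

Lemma beta_0 : beta 0 = 1.
Proof. unfold beta. simpl. field. Qed.

Lemma beta_rec k : INR (S k) * beta (S k) = INR (2 * k + 1) * beta k.
Proof.
  unfold beta. simpl odd_dfact. rewrite fact_simpl, !mult_INR.
  replace (k + (k + 0) + 1)%nat with (2 * k + 1)%nat by lia.
  pose proof (INR_fact_neq_0 k). assert (INR (S k) <> 0) by (apply not_0_INR; lia).
  field. auto.
Qed.

Lemma gam_rec k : INR (S k) * gam (S k) = INR (2 * k + 1) * gam k - / 2.
Proof.
  unfold gam. pose proof (G_rec k) as H. pose proof (pow_lt 2 k ltac:(lra)).
  simpl pow. apply Rmult_eq_reg_r with (2 * 2 ^ k); [|lra].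
  replace (INR (S k) * (G (S k) / (2 * 2 ^ k)) * (2 * 2 ^ k)) with (INR (S k) * G (S k))
    by (field; lra).
  replace ((INR (2 * k + 1) * (G k / 2 ^ k) - / 2) * (2 * 2 ^ k))
    with (2 * INR (2 * k + 1) * G k - 2 ^ k) by (field; lra).
  lra.
Qed.

Lemma delta_0 : delta 0 = PI / 4.
Proof. unfold delta, gam. rewrite beta_0, G_0. simpl. field. Qed.

Lemma delta_rec k : INR (S k) * delta (S k) = INR (2 * k + 1) * delta k - / 2.
Proof.
  unfold delta. pose proof (beta_rec k). pose proof (gam_rec k).
  transitivity (PI / 4 * (INR (S k) * beta (S k)) + INR (S k) * gam (S k)); [ring|].
  rewrite beta_rec, gam_rec. ring.
Qed.

Definition rho (x : R) : R := 2 * x ^ 2 / (1 + x ^ 2).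

(* [J k] is the primitive of [rho ^ k / (1 + x ^ 2)] vanishing at [0]; at [x = 1]
   it obeys the recurrence of [delta], so [delta k] is the integral of
   [rho ^ k / (1 + x ^ 2)] over [[0, 1]]. *)
Fixpoint J (k : nat) (x : R) : R :=
  match k with
  | O => atan x
  | S k' => (INR (2 * k' + 1) * J k' x - x * rho x ^ k' / (1 + x ^ 2)) / INR (S k')
  end.

Lemma one_plus_sq_pos x : 0 < 1 + x ^ 2.
Proof. pose proof (pow2_ge_0 x). lra. Qed.

Lemma J_derive k x : is_derive (J k) x (rho x ^ k / (1 + x ^ 2)).
Proof.
  revert x. induction k as [|k IH]; intros x; pose proof (one_plus_sq_pos x) as Hx.
  - change (J 0) with atan. rewrite pow_O. apply is_derive_Reals.
    replace (1 / (1 + x ^ 2)) with (/ (1 + x ^ 2)) by (field; lra).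
    apply derivable_pt_lim_atan.
  - change (J (S k)) with
      (fun y => (INR (2 * k + 1) * J k y - y * rho y ^ k / (1 + y ^ 2)) / INR (S k)).
    unfold rho. auto_derive.
    + repeat split; try lra. exists (rho x ^ k / (1 + x ^ 2)). apply IH.
    + replace (Derive (fun y => J k y) x) with (rho x ^ k / (1 + x ^ 2))
        by (symmetry; apply is_derive_unique, IH).
      unfold rho. replace (x * (x * 1)) with (x ^ 2) by ring. unfold Rdiv.
      set (A := 2 * x ^ 2 * / (1 + x ^ 2)).
      destruct k as [|k].
      * simpl. unfold A. field. lra.
      * simpl Init.Nat.pred. rewrite <- !tech_pow_Rmult.
        replace (S k + (S k + 0) + 1)%nat with (S (S (S (2 * k)))) by lia.
        rewrite !S_INR, mult_INR. change (INR 2) with 2. unfold A. field.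
        pose proof (pos_INR k). split; lra.
Qed.

Lemma J_at_0 k : J k 0 = 0.
Proof. induction k as [|k IH]; simpl; [apply atan_0|]. rewrite IH. unfold Rdiv. ring. Qed.

Lemma delta_J k : delta k = J k 1.
Proof.
  induction k as [|k IH]; [rewrite delta_0; simpl; now rewrite atan_1|].
  apply Rmult_eq_reg_l with (INR (S k)); [|apply not_0_INR; lia].
  rewrite delta_rec, IH. cbn [J].
  replace (rho 1) with 1 by (unfold rho; field). rewrite pow1.
  field. apply not_0_INR. lia.
Qed.

Lemma rho_unit x : 0 <= x <= 1 -> 0 <= rho x <= 1.
Proof.
  intros Hx. unfold rho. pose proof (one_plus_sq_pos x). pose proof (pow2_ge_0 x).
  split; [apply Rdiv_le_0_compat; lra|].
  apply Rmult_le_reg_r with (1 + x ^ 2); [lra|].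
  unfold Rdiv. rewrite Rmult_assoc, Rinv_l by lra. nra.
Qed.

Lemma delta_nonneg k : 0 <= delta k.
Proof.
  rewrite delta_J.
  destruct (MVT_cor2 (J k) (fun x => rho x ^ k / (1 + x ^ 2)) 0 1) as [c [Hc Hc01]];
    [lra | intros; apply is_derive_Reals, J_derive |].
  rewrite J_at_0, Rminus_0_r in Hc. rewrite Hc.
  apply Rmult_le_pos; [|lra]. apply Rdiv_le_0_compat; [|apply one_plus_sq_pos].
  apply pow_le, rho_unit. lra.
Qed.

Lemma delta_decr k : delta (S k) <= delta k.
Proof.
  rewrite !delta_J.
  destruct (MVT_cor2 (fun x => J k x - J (S k) x)
              (fun x => rho x ^ k / (1 + x ^ 2) - rho x ^ S k / (1 + x ^ 2)) 0 1)
    as [c [Hc Hc01]];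
    [lra | intros; apply derivable_pt_lim_minus; apply is_derive_Reals, J_derive |].
  rewrite !J_at_0 in Hc.
  pose proof (rho_unit c ltac:(lra)). pose proof (pow_le (rho c) k ltac:(lra)).
  pose proof (one_plus_sq_pos c).
  assert (rho c ^ S k <= rho c ^ k) by (simpl; nra).
  assert (0 <= rho c ^ k / (1 + c ^ 2) - rho c ^ S k / (1 + c ^ 2)).
  { unfold Rdiv. rewrite <- Rmult_minus_distr_r.
    apply Rmult_le_pos; [lra | apply Rlt_le, Rinv_0_lt_compat; lra]. }
  nra.
Qed.

Lemma delta_le k : delta k <= PI / 4.
Proof.
  induction k as [|k IH]; [rewrite delta_0; lra|]. pose proof (delta_decr k). lra.
Qed.

Lemma delta_tail k : INR k * delta (S k) <= / 2.
Proof.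
  pose proof (delta_rec k) as H. pose proof (delta_decr k). pose proof (pos_INR k).
  replace (2 * k + 1)%nat with (S (2 * k)) in H by lia.
  rewrite !S_INR, mult_INR in H. simpl INR in H. nra.
Qed.

(** * Stirling transforms *)

Lemma stirling2_gt n k : (n < k)%nat -> stirling2 n k = 0%nat.
Proof.
  revert k; induction n as [|n IH]; intros [|k] H; simpl; try lia; auto.
  rewrite !IH by lia. lia.
Qed.

Lemma stirling2_le_pow n k : INR (stirling2 n k) <= INR (S k) ^ n.
Proof.
  revert k; induction n as [|n IH]; intros k; [destruct k; simpl; lra|].
  destruct k as [|k]; [change (stirling2 (S n) 0) with 0%nat; apply pow_le, pos_INR|].
  change (stirling2 (S n) (S k)) with (S k * stirling2 n (S k) + stirling2 n k)%nat.
  rewrite plus_INR, mult_INR, <- tech_pow_Rmult.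
  pose proof (IH (S k)). pose proof (IH k). pose proof (pos_INR (S k)).
  assert (INR (S k) ^ n <= INR (S (S k)) ^ n)
    by (apply pow_incr; split; [apply pos_INR | apply le_INR; lia]).
  assert (INR (S k) * INR (stirling2 n (S k)) <= INR (S k) * INR (S (S k)) ^ n)
    by (apply Rmult_le_compat_l; lra).
  set (a := INR (S (S k)) ^ n) in *. rewrite (S_INR (S k)). lra.
Qed.

(* The coefficient of [z^n / n!] in [A (e^z - 1)], where [A x = sum_k a k x^k]. *)
Definition stirling_tr (n : nat) (a : nat -> R) : R :=
  sum_n_m (fun k => a k * INR (fact k) * INR (stirling2 n k)) 0 n.

(* [d/dz] of [A (e^z - 1)] and of [A (1 - e^(-z))], acting on the coefficients of [A]. *)
Definition dplus (a : nat -> R) (k : nat) : R := INR k * a k + INR (S k) * a (S k).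
Definition dminus (a : nat -> R) (k : nat) : R := INR (S k) * a (S k) - INR k * a k.

Lemma stirling_tr_S n a : stirling_tr (S n) a = stirling_tr n (dplus a).
Proof.
  unfold stirling_tr, dplus. rewrite sumR_Sn_m, <- sumR_shift by lia.
  change (stirling2 (S n) 0) with 0%nat.
  set (f k := INR k * a k * INR (fact k) * INR (stirling2 n k)).
  assert (Hf : sum_n_m (fun k => f (S k)) 0 n = sum_n_m f 0 n :> R).
  { rewrite sumR_shift, sumR_n_Sm, (sumR_Sn_m f 0 n) by lia.
    unfold f at 2 3. rewrite stirling2_gt by lia. change (INR 0) with 0. ring. }
  transitivity (sum_n_m (fun k => f (S k)) 0 n
                + sum_n_m (fun k => INR (S k) * a (S k) * INR (fact k) * INR (stirling2 n k)) 0 n).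
  - rewrite <- sumR_plus. change (INR 0) with 0. rewrite Rmult_0_r, Rplus_0_l.
    apply sumR_ext. intros k _. unfold f.
    change (stirling2 (S n) (S k)) with (S k * stirling2 n (S k) + stirling2 n k)%nat.
    rewrite plus_INR, mult_INR, fact_simpl, mult_INR. ring.
  - rewrite Hf. unfold f. rewrite <- sumR_plus. apply sumR_ext. intros; ring.
Qed.

Lemma stirling_tr_ext n a b : (forall k, a k = b k) -> stirling_tr n a = stirling_tr n b.
Proof. intros H. unfold stirling_tr. apply sumR_ext. intros. now rewrite H. Qed.

Lemma stirling_tr_scal n c a : stirling_tr n (fun k => c * a k) = c * stirling_tr n a.
Proof. unfold stirling_tr. rewrite <- sumR_scal_l. apply sumR_ext. intros; ring. Qed.

Lemma stirling_tr_plus n a b :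
  stirling_tr n (fun k => a k + b k) = stirling_tr n a + stirling_tr n b.
Proof. unfold stirling_tr. rewrite <- sumR_plus. apply sumR_ext. intros; ring. Qed.

Lemma stirling_tr_nonneg n a : (forall k, 0 <= a k) -> 0 <= stirling_tr n a.
Proof.
  intros H. apply sumR_nonneg. intros k _.
  apply Rmult_le_pos; [apply Rmult_le_pos|]; auto using pos_INR.
Qed.

Lemma stirling_tr_iter n a : stirling_tr n a = Nat.iter n dplus a 0%nat.
Proof.
  revert a. induction n as [|n IH]; intros a.
  - unfold stirling_tr. rewrite sumR_single. simpl. ring.
  - now rewrite stirling_tr_S, IH, Nat.iter_succ_r.
Qed.

Lemma stirling_tr_alt n a :
  stirling_tr n (fun k => (-1) ^ k * a k) = (-1) ^ n * Nat.iter n dminus a 0%nat.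
Proof.
  revert a. induction n as [|n IH]; intros a.
  - unfold stirling_tr. rewrite sumR_single. simpl. ring.
  - rewrite stirling_tr_S, Nat.iter_succ_r.
    rewrite (stirling_tr_ext _ _ (fun k => (-1) * ((-1) ^ k * dminus a k)))
      by (intros; unfold dplus, dminus; simpl; ring).
    rewrite stirling_tr_scal, IH. simpl. ring.
Qed.

Definition linear_op (L : (nat -> R) -> nat -> R) : Prop :=
  forall x y a b k, L (fun j => x * a j + y * b j) k = x * L a k + y * L b k.

Lemma dplus_linear : linear_op dplus.
Proof. intros x y a b k. unfold dplus. ring. Qed.

Lemma dminus_linear : linear_op dminus.
Proof. intros x y a b k. unfold dminus. ring. Qed.

Lemma iter_linear L n : linear_op L -> linear_op (Nat.iter n L).
Proof.
  intros HL. induction n as [|n IH]; intros x y a b k; [reflexivity|].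
  rewrite !Nat.iter_succ, <- HL. f_equal. extensionality j. apply IH.
Qed.

Lemma sum_binom_S (x : nat -> R) n :
  sum_n_m (fun j => INR (binom (S n) j) * x j) 0 (S n) =
  sum_n_m (fun j => INR (binom n j) * x (S j)) 0 n
  + sum_n_m (fun j => INR (binom n j) * x j) 0 n :> R.
Proof.
  rewrite sumR_Sn_m, <- sumR_shift by lia.
  rewrite (sumR_ext (fun j => INR (binom (S n) (S j)) * x (S j))
                    (fun j => INR (binom n j) * x (S j) + INR (binom n (S j)) * x (S j)))
    by (intros; simpl binom; rewrite plus_INR; ring).
  rewrite sumR_plus, (sumR_shift (fun j => INR (binom n j) * x j)).
  rewrite (sumR_Sn_m (fun j => INR (binom n j) * x j) 0 n),
          (sumR_n_Sm (fun j => INR (binom n j) * x j) 1 n) by lia.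
  rewrite (binom_gt n (S n)), !binom_n_0 by lia. change (INR 0) with 0. change (INR 1) with 1. ring.
Qed.

(* Leibniz's rule for [(e^z X)^(n) (0)], [L] acting as [d/dz] and [V] as
   multiplication by [e^z]. *)
Lemma iter_comm_binomial L V : linear_op L ->
  (forall a, L (V a) = fun k => V (L a) k + V a k) -> (forall a, V a 0%nat = a 0%nat) ->
  forall n a, Nat.iter n L (V a) 0%nat
              = sum_n_m (fun j => INR (binom n j) * Nat.iter j L a 0%nat) 0 n.
Proof.
  intros HL HLV HV0 n. induction n as [|n IH]; intros a.
  - rewrite sumR_single. simpl. rewrite HV0. ring.
  - rewrite Nat.iter_succ_r, HLV.
    transitivity (Nat.iter n L (fun k => 1 * V (L a) k + 1 * V a k) 0%nat).
    { f_equal. extensionality k. ring. }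
    rewrite (iter_linear L n HL), !Rmult_1_l, !IH, sum_binom_S.
    f_equal. apply sumR_ext. intros. now rewrite Nat.iter_succ_r.
Qed.

(* The coefficientwise form of [X = (2 - e^z) X'] for the exponential generating
   function [X] of [x]. *)
Definition exp_ode (x : nat -> R) : Prop :=
  forall n, x n = 2 * x (S n) - sum_n_m (fun j => INR (binom n j) * x (S j)) 0 n.

Lemma exp_ode_1 x : exp_ode x -> x 1%nat = x 0%nat.
Proof. intros Hx. pose proof (Hx 0%nat) as H. rewrite sumR_single in H. simpl in H. lra. Qed.

Lemma exp_ode_SS x : exp_ode x ->
  forall m, x (S (S m)) = x (S m) + sum_n_m (fun j => INR (binom (S m) j) * x (S j)) 0 m.
Proof.
  intros Hx m. pose proof (Hx (S m)) as H.
  rewrite sumR_n_Sm, binom_n_n in H by lia. change (INR 1) with 1 in H. lra.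
Qed.

Lemma exp_ode_unique x y : exp_ode x -> exp_ode y -> x 0%nat = y 0%nat ->
  forall n, x n = y n.
Proof.
  intros Hx Hy H0.
  assert (Hle : forall n j, (j <= n)%nat -> x j = y j).
  { induction n as [|n IH]; intros j Hj.
    - now replace j with 0%nat by lia.
    - destruct (Nat.eq_dec j (S n)) as [->|]; [|apply IH; lia].
      destruct n as [|n]; [now rewrite exp_ode_1, (exp_ode_1 y)|].
      rewrite (exp_ode_SS x Hx), (exp_ode_SS y Hy), (IH (S n)) by lia.
      f_equal. apply sumR_ext. intros k Hk. rewrite IH by lia. reflexivity. }
  intros n. now apply (Hle n).
Qed.

Lemma iter_exp_ode L V a : linear_op L ->
  (forall a, L (V a) = fun k => V (L a) k + V a k) -> (forall a, V a 0%nat = a 0%nat) ->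
  a = (fun k => 2 * L a k + (-1) * V (L a) k) ->
  exp_ode (fun n => Nat.iter n L a 0%nat).
Proof.
  intros HL HLV HV0 Ha n. rewrite Ha at 1.
  rewrite (iter_linear L n HL), (iter_comm_binomial L V HL HLV HV0), Nat.iter_succ_r.
  rewrite (sumR_ext (fun j => INR (binom n j) * Nat.iter (S j) L a 0%nat)
                    (fun j => INR (binom n j) * Nat.iter j L (L a) 0%nat))
    by (intros; now rewrite Nat.iter_succ_r).
  ring.
Qed.

(** * [b] as a Stirling transform with positive weights *)

(* Multiplication by [e^z] after the substitutions [x = 1 - e^(-z)] and [x = e^z - 1],
   i.e. by [1 / (1 - x)] and by [1 + x]. *)
Definition psum (a : nat -> R) (k : nat) : R := sum_n_m a 0 k.

Definition adj_sum (a : nat -> R) (k : nat) : R :=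
  a k + match k with O => 0 | S k' => a k' end.

Lemma psum_dminus a k : psum (dminus a) k = INR (S k) * a (S k).
Proof.
  unfold psum, dminus. rewrite (sumR_telescope (fun i => INR i * a i)) by lia.
  change (INR 0) with 0. ring.
Qed.

Lemma dminus_psum a : dminus (psum a) = fun k => psum (dminus a) k + psum a k.
Proof.
  extensionality k. rewrite psum_dminus. unfold dminus at 1, psum.
  rewrite sumR_n_Sm, S_INR by lia. ring.
Qed.

Lemma dplus_adj_sum a : dplus (adj_sum a) = fun k => adj_sum (dplus a) k + adj_sum a k.
Proof.
  extensionality k. unfold dplus, adj_sum.
  destruct k; [simpl; ring | rewrite !S_INR; ring].
Qed.

Lemma beta_fixed : beta = fun k => 2 * dminus beta k + (-1) * psum (dminus beta) k.
Proof.
  extensionality k. rewrite psum_dminus. unfold dminus.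
  pose proof (beta_rec k) as H. replace (2 * k + 1)%nat with (S (2 * k)) in H by lia.
  rewrite !S_INR, mult_INR in H. change (INR 2) with 2 in H. rewrite !S_INR. lra.
Qed.

(* [theta k] is the coefficient of [x ^ k] in [sqrt ((1 + x) / (1 - x))], as [beta k]
   is that of [/ sqrt (1 - 2 x)]. *)
Fixpoint theta (k : nat) : R :=
  match k with
  | O => 1
  | S O => 1
  | S ((S k'') as k') => (theta k' + INR k'' * theta k'') / INR (S k')
  end.

Lemma theta_rec k : INR (S (S k)) * theta (S (S k)) = theta (S k) + INR k * theta k.
Proof.
  cbn [theta]. assert (INR (S (S k)) <> 0) by (apply not_0_INR; lia). field. auto.
Qed.

Lemma theta_fixed : theta = fun k => 2 * dplus theta k + (-1) * adj_sum (dplus theta) k.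
Proof.
  extensionality k. unfold dplus, adj_sum. destruct k as [|k]; [simpl; ring|].
  pose proof (theta_rec k). rewrite !S_INR in *. lra.
Qed.

Lemma beta_exp_ode : exp_ode (fun n => Nat.iter n dminus beta 0%nat).
Proof.
  apply (iter_exp_ode dminus psum); auto using dminus_linear, dminus_psum, beta_fixed.
  intros a. apply sumR_single.
Qed.

Lemma theta_exp_ode : exp_ode (fun n => stirling_tr n theta).
Proof.
  replace (fun n => stirling_tr n theta) with (fun n => Nat.iter n dplus theta 0%nat)
    by (extensionality n; symmetry; apply stirling_tr_iter).
  apply (iter_exp_ode dplus adj_sum); auto using dplus_linear, dplus_adj_sum, theta_fixed.
  intros a. unfold adj_sum. ring.
Qed.

Lemma dminus_beta_stirling_tr n : Nat.iter n dminus beta 0%nat = stirling_tr n theta.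
Proof.
  apply (exp_ode_unique _ _ beta_exp_ode theta_exp_ode).
  unfold stirling_tr. rewrite sumR_single. simpl. rewrite beta_0. ring.
Qed.

Lemma b_seq_alt n :
  b_seq n = / 4 * ((-1) ^ n / INR (fact n)) * stirling_tr n (fun k => (-1) ^ k * beta k).
Proof.
  unfold b_seq, stirling_tr. f_equal. apply sumR_ext. intros k _. unfold beta.
  pose proof (INR_fact_neq_0 k). field. auto.
Qed.

Lemma b_seq_stirling_tr n : b_seq n = stirling_tr n theta / (4 * INR (fact n)).
Proof.
  rewrite b_seq_alt, stirling_tr_alt, dminus_beta_stirling_tr.
  assert (Hsq : (-1) ^ n * (-1) ^ n = 1).
  { rewrite <- Rpow_mult_distr. replace ((-1) * (-1)) with 1 by ring. apply pow1. }
  pose proof (INR_fact_neq_0 n).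
  transitivity (/ 4 * ((-1) ^ n * (-1) ^ n) * stirling_tr n theta / INR (fact n)).
  - field. auto.
  - rewrite Hsq. field. auto.
Qed.

Lemma theta_pair m :
  theta (S (2 * m)) = theta (2 * m) /\
  theta (S (S (2 * m))) = theta (2 * m) * INR (2 * m + 1) / INR (2 * m + 2).
Proof.
  induction m as [|m [Hodd Heven]]; [simpl; split; field|].
  replace (2 * S m)%nat with (S (S (2 * m))) by lia.
  replace (2 * m + 1)%nat with (S (2 * m)) in Heven by lia.
  replace (2 * m + 2)%nat with (S (S (2 * m))) in Heven by lia.
  pose proof (pos_INR (2 * m)).
  assert (Hodd' : theta (S (S (S (2 * m)))) = theta (S (S (2 * m)))).
  { apply Rmult_eq_reg_l with (INR (S (S (S (2 * m))))); [|apply not_0_INR; lia].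
    rewrite theta_rec, Hodd, Heven. rewrite !S_INR. field. lra. }
  split; [exact Hodd'|].
  apply Rmult_eq_reg_l with (INR (S (S (S (S (2 * m)))))); [|apply not_0_INR; lia].
  rewrite theta_rec, Hodd'.
  replace (S (S (2 * m)) + 1)%nat with (S (S (S (2 * m)))) by lia.
  replace (S (S (2 * m)) + 2)%nat with (S (S (S (S (2 * m))))) by lia.
  rewrite !S_INR. field. lra.
Qed.

(* Wallis-type bound: [theta (2 m) = C(2m, m) / 4 ^ m]. *)
Lemma theta_even_bound m : 0 < theta (2 * m) /\ / INR (4 * m + 1) <= theta (2 * m) ^ 2.
Proof.
  induction m as [|m [Hpos Hsq]]; [simpl; lra|].
  replace (2 * S m)%nat with (S (S (2 * m))) by lia.
  rewrite (proj2 (theta_pair m)).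
  replace (4 * S m + 1)%nat with (4 * m + 5)%nat by lia.
  rewrite !plus_INR, !mult_INR in *. change (INR 1) with 1 in *.
  replace (INR 2) with 2 in * by (simpl; ring).
  replace (INR 4) with 4 in * by (simpl; ring).
  replace (INR 5) with 5 in * by (simpl; ring).
  pose proof (pos_INR m). set (t := INR m) in *. set (B := theta (2 * m)) in *.
  split; [apply Rdiv_lt_0_compat; [apply Rmult_lt_0_compat|]; lra|].
  set (X := (2 * t + 1) ^ 2 / (2 * t + 2) ^ 2).
  replace ((B * (2 * t + 1) / (2 * t + 2)) ^ 2) with (B ^ 2 * X) by (unfold X; field; lra).
  assert (HX : 0 <= X)
    by (unfold X; apply Rdiv_le_0_compat; [apply pow2_ge_0 | apply pow_lt; lra]).
  assert (Hgap : / (4 * t + 5) < / (4 * t + 1) * X).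
  { assert (E : / (4 * t + 1) * X - / (4 * t + 5)
                = / ((4 * t + 1) * (4 * t + 5) * (2 * t + 2) ^ 2))
      by (unfold X; field; repeat split; lra).
    assert (0 < / ((4 * t + 1) * (4 * t + 5) * (2 * t + 2) ^ 2)).
    { apply Rinv_0_lt_compat. repeat apply Rmult_lt_0_compat; try lra. }
    lra. }
  assert (/ (4 * t + 1) * X <= B ^ 2 * X) by (apply Rmult_le_compat_r; auto).
  lra.
Qed.

Lemma theta_bound k : 0 < theta k /\ / INR (2 * k + 1) <= theta k ^ 2.
Proof.
  destruct (Nat.Even_or_Odd k) as [[m ->]|[m ->]].
  - replace (2 * (2 * m) + 1)%nat with (4 * m + 1)%nat by lia. apply theta_even_bound.
  - destruct (theta_even_bound m) as [Hpos Hsq].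
    replace (2 * m + 1)%nat with (S (2 * m)) by lia. rewrite (proj1 (theta_pair m)).
    split; [exact Hpos|]. eapply Rle_trans; [|exact Hsq].
    apply Rinv_le_contravar; [apply lt_0_INR; lia | apply le_INR; lia].
Qed.

(** * Growth of [b] *)

Lemma exp_ode_lower x : exp_ode x -> (forall n, 0 <= x n) -> forall m,
  INR (S (S m)) * x (S m) + INR (S m) * INR m / 2 * x m <= x (S (S m)).
Proof.
  intros Hx Hpos m. rewrite (exp_ode_SS x Hx), S_INR.
  destruct m as [|m].
  - rewrite sumR_single. simpl. lra.
  - rewrite sumR_n_Sm, binom_Sn_n by lia.
    assert (INR (binom (S (S m)) m) * x (S m)
            <= sum_n_m (fun j => INR (binom (S (S m)) j) * x (S j)) 0 m).
    { apply (sumR_ge_last (fun j => INR (binom (S (S m)) j) * x (S j))).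
      intros j. apply Rmult_le_pos; auto using pos_INR. }
    rewrite binom_SSn_n in H. lra.
Qed.

Lemma stirling_tr_theta_nonneg n : 0 <= stirling_tr n theta.
Proof. apply stirling_tr_nonneg. intros k. apply Rlt_le, theta_bound. Qed.

Lemma b_seq_rec_lower m :
  b_seq (S m) + INR m / (2 * INR (S (S m))) * b_seq m <= b_seq (S (S m)).
Proof.
  rewrite !b_seq_stirling_tr.
  pose proof (exp_ode_lower _ theta_exp_ode stirling_tr_theta_nonneg m).
  rewrite !(fact_simpl (S m)), (fact_simpl m), !mult_INR.
  pose proof (INR_fact_lt_0 m). pose proof (pos_INR m). rewrite !S_INR in *.
  set (f := INR (fact m)) in *. set (t := INR m) in *.
  set (x0 := stirling_tr m theta) in *. set (x1 := stirling_tr (S m) theta) in *.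
  set (x2 := stirling_tr (S (S m)) theta) in *.
  assert (Hf1 : 0 < (t + 1) * f) by nra.
  assert (Hf2 : 0 < (t + 1 + 1) * ((t + 1) * f)) by nra.
  apply Rmult_le_reg_r with (4 * ((t + 1 + 1) * ((t + 1) * f))); [lra|].
  replace ((x1 / (4 * ((t + 1) * f)) + t / (2 * (t + 1 + 1)) * (x0 / (4 * f)))
           * (4 * ((t + 1 + 1) * ((t + 1) * f))))
    with ((t + 1 + 1) * x1 + (t + 1) * t / 2 * x0) by (field; lra).
  replace (x2 / (4 * ((t + 1 + 1) * ((t + 1) * f)))
           * (4 * ((t + 1 + 1) * ((t + 1) * f)))) with (x2) by (field; lra).
  lra.
Qed.

Lemma b_seq_0 : b_seq 0 = / 4.
Proof. unfold b_seq. rewrite sumR_single. simpl. field. Qed.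

Lemma b_seq_le_S n : b_seq n <= b_seq (S n).
Proof.
  destruct n as [|m].
  - rewrite !b_seq_stirling_tr, (exp_ode_1 _ theta_exp_ode). simpl. lra.
  - pose proof (b_seq_rec_lower m). pose proof (stirling_tr_theta_nonneg m).
    assert (0 <= INR m / (2 * INR (S (S m))) * b_seq m).
    { rewrite b_seq_stirling_tr. pose proof (pos_INR m). pose proof (INR_fact_lt_0 m).
      apply Rmult_le_pos; apply Rdiv_le_0_compat; try apply Rmult_lt_0_compat; try lra.
      apply lt_0_INR. lia. }
    lra.
Qed.

Lemma b_seq_ge_quarter n : / 4 <= b_seq n.
Proof.
  induction n as [|n IH]; [rewrite b_seq_0; lra|]. pose proof (b_seq_le_S n). lra.
Qed.

Lemma b_seq_linear_lower n : INR n / 24 - 1 <= b_seq n.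
Proof.
  assert (Hp : forall p, / 4 + INR p / 24 <= b_seq (S (S p))).
  { induction p as [|p IH]; [simpl; pose proof (b_seq_ge_quarter 2); lra|].
    pose proof (b_seq_rec_lower (S p)). pose proof (b_seq_ge_quarter (S p)).
    pose proof (pos_INR p). rewrite !S_INR in *.
    assert (/ 24 <= (INR p + 1) / (2 * (INR p + 1 + 1 + 1)) * b_seq (S p)).
    { apply Rle_trans with ((INR p + 1) / (2 * (INR p + 1 + 1 + 1)) * / 4).
      - apply Rmult_le_reg_r with (24 * (2 * (INR p + 1 + 1 + 1))); [lra|].
        field_simplify; lra.
      - apply Rmult_le_compat_l; [apply Rdiv_le_0_compat|]; lra. }
    lra. }
  destruct n as [|[|p]]; [simpl; pose proof (b_seq_ge_quarter 0); lra
                         | simpl; pose proof (b_seq_ge_quarter 1); lra |].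
  pose proof (Hp p). rewrite !S_INR. lra.
Qed.

Lemma b_seq_lim : is_lim_seq b_seq p_infty.
Proof.
  apply is_lim_seq_le_p_loc with (fun n => INR n / 24 - 1).
  - exists 0%nat. intros n _. apply b_seq_linear_lower.
  - apply is_lim_seq_spec. intros M.
    destruct (proj2 (is_lim_seq_spec _ _) is_lim_seq_INR (24 * (M + 1))) as [N HN].
    exists N. intros n Hn. specialize (HN n Hn). lra.
Qed.

(** * Comparison of [c] with [pi b] *)

Lemma c_seq_alt n :
  c_seq n = (-1) ^ (S n) / INR (fact n) * stirling_tr n (fun k => (-1) ^ k * gam k).
Proof.
  unfold c_seq, stirling_tr. f_equal.
  rewrite (sumR_Sn_m _ 0 n) by lia. unfold gam at 1. rewrite G_0.
  replace ((-1) ^ 0 * (0 / 2 ^ 0) * INR (fact 0) * INR (stirling2 n 0)) with 0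
    by (simpl; field). rewrite Rplus_0_l.
  apply sumR_ext. intros k _. unfold gam, G.
  rewrite (sumR_ext _ (fun l => Binomial.C (2 * k - l) k * im_1mi l / INR l)).
  - pose proof (pow_lt 2 k ltac:(lra)). field. lra.
  - intros l _. rewrite <- (proj2 (polar_1mi l)). unfold Rdiv. ring.
Qed.

Lemma PI_b_minus_c n :
  PI * b_seq n - c_seq n = (-1) ^ n / INR (fact n) * stirling_tr n (fun k => (-1) ^ k * delta k).
Proof.
  rewrite b_seq_alt, c_seq_alt.
  rewrite (stirling_tr_ext n (fun k => (-1) ^ k * delta k)
                           (fun k => PI / 4 * ((-1) ^ k * beta k) + (-1) ^ k * gam k))
    by (intros; unfold delta; ring).
  rewrite stirling_tr_plus, stirling_tr_scal. simpl pow. unfold Rdiv. ring.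
Qed.

Lemma PI_b_minus_c_le n : Rabs (PI * b_seq n - c_seq n) <= stirling_tr n delta / INR (fact n).
Proof.
  rewrite PI_b_minus_c. unfold Rdiv. rewrite !Rabs_mult, pow_1_abs, Rabs_inv.
  rewrite (Rabs_right (INR (fact n))) by (apply Rle_ge, pos_INR).
  rewrite Rmult_1_l, Rmult_comm. apply Rmult_le_compat_r.
  - apply Rlt_le, Rinv_0_lt_compat, INR_fact_lt_0.
  - eapply Rle_trans; [apply sumR_abs|]. apply sumR_le. intros k _.
    rewrite !Rabs_mult, pow_1_abs, (Rabs_right (delta k)) by (apply Rle_ge, delta_nonneg).
    rewrite !Rabs_right by (apply Rle_ge, pos_INR). lra.
Qed.

Lemma delta_theta_sq k : 4 * INR k ^ 2 * delta (S k) ^ 2 <= INR (2 * k + 3) * theta (S k) ^ 2.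
Proof.
  pose proof (delta_tail k). pose proof (delta_nonneg (S k)). pose proof (pos_INR k).
  destruct (theta_bound (S k)) as [_ Hsq].
  replace (2 * S k + 1)%nat with (2 * k + 3)%nat in Hsq by lia.
  assert (H3 : 0 < INR (2 * k + 3)) by (apply lt_0_INR; lia).
  assert (1 <= INR (2 * k + 3) * theta (S k) ^ 2).
  { apply Rmult_le_compat_l with (r := INR (2 * k + 3)) in Hsq; [|lra].
    rewrite Rinv_r in Hsq by lra. exact Hsq. }
  assert (0 <= INR k * delta (S k)) by (apply Rmult_le_pos; lra).
  nra.
Qed.

Lemma delta_theta_small eps : 0 < eps ->
  exists K, forall k, (K <= k)%nat -> delta k <= eps * theta k.
Proof.
  intros He.
  destruct (proj2 (is_lim_seq_spec _ _) is_lim_seq_INR (/ (eps * eps) + 2)) as [N HN].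
  exists (S N). intros [|k] Hk; [lia|].
  pose proof (HN k ltac:(lia)) as Hkt. pose proof (delta_theta_sq k) as Hsq.
  pose proof (delta_nonneg (S k)). destruct (theta_bound (S k)) as [Hpos _].
  replace (INR (2 * k + 3)) with (2 * INR k + 3) in Hsq
    by (rewrite plus_INR, mult_INR; simpl; ring).
  set (t := INR k) in *. set (d := delta (S k)) in *. set (b := theta (S k)) in *.
  assert (Hinv : 0 < / (eps * eps)) by (apply Rinv_0_lt_compat; nra).
  assert (Het : 1 <= eps * eps * t).
  { apply Rmult_le_reg_l with (/ (eps * eps)); [lra|].
    rewrite <- Rmult_assoc, Rinv_l by nra. lra. }
  assert (Hgrow : 2 * t + 3 <= 4 * (eps * eps) * t ^ 2) by nra.
  assert (Hd2 : d ^ 2 * (4 * t ^ 2) <= (eps * b) ^ 2 * (4 * t ^ 2)) by nra.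
  apply Rmult_le_reg_r in Hd2; [|nra].
  assert (0 < eps * b) by nra. nra.
Qed.

Lemma stirling_tr_delta_split eps K n : (1 <= K <= n)%nat -> 0 <= eps ->
  (forall k, (K <= k)%nat -> delta k <= eps * theta k) ->
  stirling_tr n delta <= INR K * (PI / 4 * INR (fact K)) * INR K ^ n + eps * stirling_tr n theta.
Proof.
  intros HK He Hd. unfold stirling_tr.
  rewrite (sumR_Chasles _ 0 (pred K) n) by lia.
  set (t k := theta k * INR (fact k) * INR (stirling2 n k)).
  assert (Ht : forall k, 0 <= t k).
  { intros k. unfold t. pose proof (theta_bound k). pose proof (pos_INR (fact k)).
    pose proof (pos_INR (stirling2 n k)). apply Rmult_le_pos; [apply Rmult_le_pos|]; lra. }
  assert (Hhead : sum_n_m (fun k => delta k * INR (fact k) * INR (stirling2 n k)) 0 (pred K)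
                  <= INR K * (PI / 4 * INR (fact K)) * INR K ^ n).
  { replace (INR K * (PI / 4 * INR (fact K)) * INR K ^ n)
      with (INR (S (pred K) - 0) * (PI / 4 * (INR (fact K) * INR K ^ n)))
      by (replace (S (pred K) - 0)%nat with K by lia; ring).
    apply sumR_const_le. intros k Hk. rewrite Rmult_assoc.
    apply Rmult_le_compat; auto using delta_nonneg, delta_le.
    - apply Rmult_le_pos; apply pos_INR.
    - apply Rmult_le_compat; auto using pos_INR.
      + apply le_INR, fact_le. lia.
      + eapply Rle_trans; [apply stirling2_le_pow|].
        apply pow_incr. split; [apply pos_INR | apply le_INR; lia]. }
  assert (Htail : sum_n_m (fun k => delta k * INR (fact k) * INR (stirling2 n k)) (S (pred K)) n
                  <= eps * sum_n_m t (S (pred K)) n).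
  { rewrite <- sumR_scal_l. apply sumR_le. intros k Hk. unfold t.
    rewrite <- !Rmult_assoc. repeat apply Rmult_le_compat_r; auto using pos_INR.
    apply Hd. lia. }
  fold t. rewrite (sumR_Chasles t 0 (pred K) n) by lia.
  pose proof (sumR_nonneg t 0 (pred K) (fun k _ => Ht k)). nra.
Qed.

Lemma PI_b_minus_c_small eps : 0 < eps ->
  exists N, forall n, (N <= n)%nat -> Rabs (PI * b_seq n - c_seq n) <= eps * b_seq n.
Proof.
  intros He. set (e := eps / 8).
  destruct (delta_theta_small e ltac:(unfold e; lra)) as [K0 HK0].
  set (K := S K0). set (C := INR K * (PI / 4 * INR (fact K))).
  assert (HC : 0 < C).
  { unfold C. pose proof PI_RGT_0. pose proof (INR_fact_lt_0 K).
    assert (0 < INR K) by (apply lt_0_INR; unfold K; lia).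
    apply Rmult_lt_0_compat; [|apply Rmult_lt_0_compat]; lra. }
  destruct (cv_speed_pow_fact (INR K) (e / C)) as [N HN];
    [apply Rdiv_lt_0_compat; unfold e; lra|].
  exists (max N K). intros n Hn.
  specialize (HN n ltac:(lia)). unfold R_dist in HN. rewrite Rminus_0_r in HN.
  assert (Hpow : 0 <= INR K ^ n / INR (fact n)).
  { apply Rdiv_le_0_compat; [apply pow_le, pos_INR | apply INR_fact_lt_0]. }
  rewrite Rabs_right in HN by lra.
  assert (HCpow : C * (INR K ^ n / INR (fact n)) <= e).
  { apply Rmult_lt_compat_l with (r := C) in HN; [|lra].
    replace (C * (e / C)) with e in HN by (field; lra). lra. }
  pose proof (b_seq_ge_quarter n) as Hb. pose proof (INR_fact_lt_0 n).
  pose proof (stirling_tr_delta_split e K n ltac:(unfold K in *; lia) ltac:(unfold e; lra)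
                (fun k Hk => HK0 k ltac:(unfold K in *; lia))) as Hs.
  eapply Rle_trans; [apply PI_b_minus_c_le|].
  rewrite b_seq_stirling_tr in Hb |- *. fold C in Hs.
  apply Rmult_le_reg_r with (INR (fact n)); [lra|].
  replace (stirling_tr n delta / INR (fact n) * INR (fact n)) with (stirling_tr n delta)
    by (field; lra).
  replace (eps * (stirling_tr n theta / (4 * INR (fact n))) * INR (fact n))
    with (2 * e * stirling_tr n theta) by (unfold e; field; lra).
  replace (C * INR K ^ n) with (C * (INR K ^ n / INR (fact n)) * INR (fact n)) in Hs
    by (field; lra).
  assert (Hth : INR (fact n) <= stirling_tr n theta).
  { apply Rmult_le_reg_r with (/ (4 * INR (fact n))); [apply Rinv_0_lt_compat; lra|].
    replace (INR (fact n) * / (4 * INR (fact n))) with (/ 4) by (field; lra).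
    exact Hb. }
  assert (C * (INR K ^ n / INR (fact n)) * INR (fact n) <= e * INR (fact n))
    by (apply Rmult_le_compat_r; lra).
  assert (e * INR (fact n) <= e * stirling_tr n theta)
    by (apply Rmult_le_compat_l; unfold e; lra).
  lra.
Qed.

Lemma c_div_b_lim : is_lim_seq (fun n => c_seq n / b_seq n) PI.
Proof.
  apply is_lim_seq_spec. intros eps.
  destruct (PI_b_minus_c_small (eps / 2) ltac:(pose proof (cond_pos eps); lra)) as [N HN].
  exists N. intros n Hn. specialize (HN n Hn). pose proof (b_seq_ge_quarter n).
  replace (c_seq n / b_seq n - PI) with (- (PI * b_seq n - c_seq n) / b_seq n) by (field; lra).
  unfold Rdiv. rewrite Rabs_mult, Rabs_Ropp, Rabs_inv, (Rabs_right (b_seq n)) by lra.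
  apply Rle_lt_trans with (eps / 2).
  - apply Rmult_le_reg_r with (b_seq n); [lra|].
    rewrite Rmult_assoc, Rinv_l, Rmult_1_r by lra. exact HN.
  - pose proof (cond_pos eps). lra.
Qed.

Theorem theorem6p3 :
  is_lim_seq b_seq p_infty /\
  is_lim_seq (fun n => c_seq n / b_seq n) PI /\
  is_lim_seq c_seq p_infty.
Proof.
  split; [exact b_seq_lim|]. split; [exact c_div_b_lim|].
  apply is_lim_seq_ext with (fun n => b_seq n * (c_seq n / b_seq n)).
  - intros n. pose proof (b_seq_ge_quarter n). field. lra.
  - apply is_lim_seq_mult with p_infty PI; [exact b_seq_lim | exact c_div_b_lim |].
    apply is_Rbar_mult_p_infty_pos, PI_RGT_0.
Qed.
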